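(* Let $\phi:\mathbb{N}_0\to\mathbb{N}_0$ satisfy $\phi(0)=0$ and $\phi(x)\neq x$ for all $x\in\mathbb{N}$, and let $n\ge2$. If the local function $\phi_n$ has no cycle, then \[ \#M_n(\phi)^k=|J_{n,k}(\phi)|\le n-k\quad(1\le k\le n), \] where $J_{n,k}(\phi)=\{x\in D_n:\phi_n^k(x)\in D_n\}$.
   Context: $\mathbb{N}=\{1,2,\dots\}$, $\mathbb{N}_0=\mathbb{N}\cup\{0\}$, $D_n=\{1,\dots,n\}$, $D_{n,0}=D_n\cup\{0\}$. The local function $\phi_n:D_{n,0}\to D_{n,0}$ is $\phi_n(x)=\phi(x)$ if $x\in D_n$ and $\phi(x)\in D_n$, and $\phi_n(x)=0$ otherwise. ''$\phi_n$ has no cycle'' means there are no $m\ge2$ and $x\in D_n$ with $\phi_n^m(x)=x$. For $1\le i\le n$, $\mathbf{e}_i$ is the $i$-th unit vector in $\mathbb{Z}^n$ and $\mathbf{e}_0$ the zero vector. $M_n(\phi)$ is the $n\times n$ matrix whose $j$-th column is $\mathbf{e}_{\phi_n(j)}$. $\#A$ denotes the number of nonzero entries of a matrix $A$, and $\#A^k$ means $\#(A^k)$. *)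

From HB Require Import structures.
From mathcomp Require Import all_boot all_order all_algebra.
Set Implicit Arguments. Unset Strict Implicit. Unset Printing Implicit Defensive.
Import GRing.Theory.

Definition inD (n x : nat) : bool := (1 <= x) && (x <= n).

Definition phi_loc (phi : nat -> nat) (n : nat) (x : nat) : nat :=
  if inD n x && inD n (phi x) then phi x else 0.

Definition no_cycle (phi : nat -> nat) (n : nat) : Prop :=
  forall (m x : nat), 2 <= m -> inD n x -> iter m (phi_loc phi n) x <> x.

(* M_n(phi): column j (j = 1..n, indexed by ordinal j-1) is e_{phi_n(j)},
   where e_0 is the zero vector. Entry (i,j) is 1 iff phi_n(j) = i (1-based). *)
Definition Mn (phi : nat -> nat) (n : nat) : 'M[int]_n :=
  \matrix_(i < n, j < n) (if phi_loc phi n j.+1 == i.+1 then 1 else 0)%R.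

Definition nnz (m : nat) (A : 'M[int]_m) : nat :=
  #|[set ij : 'I_m * 'I_m | A ij.1 ij.2 != 0%R]|.

Definition Jset (phi : nat -> nat) (n k : nat) : seq nat :=
  [seq x <- iota 1 n | inD n (iter k (phi_loc phi n) x)].

(** The matrix of a partial self-map h of D_n (column j is e_(h j)) has as
    k-th power the matrix of the k-th iterate, so #M_n(phi)^k counts the
    points of D_n whose k-th iterate stays in D_n, i.e. |J_(n,k)|.  These
    sets decrease with k, and strictly while nonempty: if J_(n,k+1) = J_(n,k),
    then J_(n,k) is a set of points of D_n mapped into itself by phi_n, and
    by pigeonhole the orbit of any of its points would close up into a cycle
    (a loop of length 1 being a fixed point of phi).  Starting from
    |J_(n,0)| = n this gives |J_(n,k)| <= n - k. *)

From HB Require Import structures.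
From mathcomp Require Import all_boot all_order all_algebra.
From mathcomp Require Import zify.
Import GRing.Theory.

Lemma mem_iota1 n x : (x \in iota 1 n) = inD n x.
Proof. by rewrite mem_iota add1n ltnS. Qed.

Lemma card_ord_succ_count n (P : pred nat) :
  #|[set j : 'I_n | P j.+1]| = count P (iota 1 n).
Proof.
rewrite cardsE cardE /enum_mem -enumT size_filter.
have -> : iota 1 n = map succn (map val (enum 'I_n)).
  by rewrite val_enum_ord -(addn0 1) iotaDl.
by rewrite !count_map.
Qed.

Section FunctionalMatrix.

Variable n : nat.

Definition fun_mx (h : nat -> nat) : 'M[int]_n :=
  \matrix_(i < n, j < n) (if h j.+1 == i.+1 then 1 else 0)%R.

Lemma fun_mx_id : fun_mx id = 1%R.
Proof. by apply/matrixP => i j; rewrite !mxE eqSS val_eqE eq_sym; case: eqP. Qed.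

Lemma mul_fun_mx (g h : nat -> nat) :
  g 0 = 0 -> (forall x, inD n x -> (h x == 0) || inD n (h x)) ->
  (fun_mx g * fun_mx h)%R = fun_mx (g \o h).
Proof.
move=> g0 h_range; apply/matrixP => i j; rewrite -mulmxE !mxE /=.
under eq_bigr => l _ do rewrite !mxE.
have /orP[/eqP h0 | hD] : (h j.+1 == 0) || inD n (h j.+1).
- by apply: h_range; rewrite /inD ltn_ord.
- by rewrite h0 g0 big1 // => l _; exact: mulr0.
have h_lt : (h j.+1).-1 < n by case/andP: hD => h1 hn; rewrite prednK.
have h_succ : (h j.+1).-1.+1 = h j.+1 by case/andP: hD => h1 _; rewrite prednK.
rewrite (bigD1 (Ordinal h_lt)) //= h_succ eqxx mulr1 big1 ?addr0 // => l l_ne.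
case: (h j.+1 =P l.+1) => [hl | _]; last by rewrite mulr0.
by case/eqP: l_ne; apply/val_inj; rewrite /= hl.
Qed.

Lemma fun_mx_exp (g : nat -> nat) k :
  g 0 = 0 -> (forall x, inD n x -> (g x == 0) || inD n (g x)) ->
  (fun_mx g ^+ k)%R = fun_mx (iter k g).
Proof.
move=> g0 g_range; elim: k => [|k IHk]; first by rewrite expr0 -fun_mx_id.
rewrite exprS IHk mul_fun_mx //; elim: k {IHk} => [|k IHk] x xD /=.
  by rewrite xD orbT.
by case/orP: (IHk x xD) => [/eqP -> | /g_range]; rewrite ?g0.
Qed.

Lemma fun_mx_neq0 (h : nat -> nat) i j :
  (fun_mx h i j != 0%R) = (h j.+1 == i.+1).
Proof. by rewrite mxE; case: (h j.+1 =P i.+1). Qed.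

(** Each column holds at most one nonzero entry, so projecting onto the column
    index is injective on the support. *)
Lemma nnz_fun_mx (h : nat -> nat) :
  nnz (fun_mx h) = count (fun x => inD n (h x)) (iota 1 n).
Proof.
rewrite -card_ord_succ_count /nnz; set S := [set ij | _].
have snd_inj : {in S &, injective snd}.
  move=> [i j] [i' j'] /[!inE] /= /[!fun_mx_neq0] /eqP hij /eqP hij' eq_j.
  rewrite -eq_j hij in hij'; congr pair => //.
  exact/val_inj/succn_inj.
rewrite -(card_in_imset snd_inj); apply: eq_card => j; rewrite [RHS]inE.
apply/imsetP/idP => [[[i j'] /[!inE] /= /[!fun_mx_neq0] /eqP hij ->] | hD].
  by rewrite hij /inD ltn_ord.
have h_lt : (h j.+1).-1 < n by case/andP: hD => h1 hn; rewrite prednK.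
exists (Ordinal h_lt, j) => //; rewrite inE fun_mx_neq0 /= prednK //.
by case/andP: hD.
Qed.

End FunctionalMatrix.

Section LocalFunction.

Variables (phi : nat -> nat) (n : nat).

Local Notation f := (phi_loc phi n).

Lemma phi_loc_notD x : ~~ inD n x -> f x = 0.
Proof. by rewrite /phi_loc => /negbTE ->. Qed.

Lemma phi_loc0 : f 0 = 0.
Proof. exact: phi_loc_notD. Qed.

Lemma iter_phi_loc0 k : iter k f 0 = 0.
Proof. by elim: k => //= k ->; rewrite phi_loc0. Qed.

Lemma phi_loc_range x : (f x == 0) || inD n (f x).
Proof. by rewrite /phi_loc; case: ifP => [/andP[_ ->] | _]; rewrite ?orbT. Qed.

Lemma nnz_Mn_exp k : nnz (Mn phi n ^+ k)%R = size (Jset phi n k).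
Proof.
have -> : Mn phi n = fun_mx n f by [].
rewrite fun_mx_exp ?nnz_fun_mx ?size_filter // => x _.
exact: phi_loc_range.
Qed.

Lemma mem_Jset k x : (x \in Jset phi n k) = inD n x && inD n (iter k f x).
Proof. by rewrite mem_filter mem_iota1 andbC. Qed.

Lemma inD_iter_pred k x : inD n (iter k.+1 f x) -> inD n (iter k f x).
Proof. by apply: contraLR => /phi_loc_notD /= ->. Qed.

Lemma Jset_succ k :
  Jset phi n k.+1 = [seq x <- Jset phi n k | inD n (iter k.+1 f x)].
Proof.
rewrite -filter_predI; apply: eq_filter => x /=.
by case: (boolP (inD n _)) => // /inD_iter_pred ->.
Qed.

Hypothesis phi_fixfree : forall x, 1 <= x -> phi x <> x.
Hypothesis phi_acyclic : no_cycle phi n.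

Lemma iter_phi_loc_neq m x : 0 < m -> inD n x -> iter m f x != x.
Proof.
case: m => [//|[|m]] _ xD; last by apply/eqP; apply: phi_acyclic.
rewrite /= /phi_loc xD /=; case: ifP => _; last by apply: contraTneq xD => <-.
by apply/eqP/phi_fixfree; case/andP: xD.
Qed.

(** Pigeonhole on the first n+1 points of the orbit. *)
Lemma orbit_phi_loc_leaves_D x : ~ (forall i, inD n (iter i f x)).
Proof.
move=> orbitD.
have : ~~ uniq (traject f x n.+1).
  apply: contraTN isT => /(@uniq_leq_size _ _ (iota 1 n)).
  rewrite size_traject size_iota ltnn; apply=> y /trajectP[i _ ->].
  by rewrite mem_iota1.
rewrite looping_uniq negbK => /trajectP[i i_lt eq_iter].
have period_pos : 0 < n - i by rewrite subn_gt0.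
have /negP[] := @iter_phi_loc_neq (n - i) (iter i f x) period_pos (orbitD i).
by rewrite -iterD subnK ?eq_iter // ltnW.
Qed.

Lemma Jset_stationary k : Jset phi n k.+1 = Jset phi n k -> Jset phi n k = [::].
Proof.
move=> Jstat; case Jk: (Jset phi n k) => [//|x s]; exfalso.
have Jinv y : y \in Jset phi n k -> f y \in Jset phi n k.
  rewrite -{1}Jstat !mem_Jset iterSr => /andP[_ fyJ]; rewrite fyJ andbT.
  case/orP: (phi_loc_range y) fyJ => [/eqP -> | //].
  by rewrite iter_phi_loc0.
apply: (@orbit_phi_loc_leaves_D x) => i.
have : x \in Jset phi n k by rewrite Jk mem_head.
by move/(iter_in i Jinv); rewrite mem_Jset => /andP[].
Qed.

Lemma size_Jset_leq k : size (Jset phi n k) <= n - k.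
Proof.
elim: k => [|k IHk].
  by rewrite size_filter subn0 -[leqRHS](size_iota 1) count_size.
have [J0 | Jn0] := eqVneq (Jset phi n k) [::].
  by rewrite Jset_succ J0.
suff : size (Jset phi n k.+1) < size (Jset phi n k) by lia.
rewrite Jset_succ size_filter ltn_neqAle count_size andbT -all_count.
apply: contra Jn0 => /all_filterP Jfix.
by apply/eqP/Jset_stationary; rewrite Jset_succ.
Qed.

End LocalFunction.

Theorem corollary3p4 (phi : nat -> nat) (n : nat) :
  phi 0 = 0 ->
  (forall x, 1 <= x -> phi x <> x) ->
  2 <= n ->
  no_cycle phi n ->
  forall k, 1 <= k <= n ->
    nnz ((Mn phi n) ^+ k)%R = size (Jset phi n k) /\ size (Jset phi n k) <= n - k.
Proof.
move=> _ phi_fixfree _ phi_acyclic k _.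
by split; [exact: nnz_Mn_exp | exact: size_Jset_leq].
Qed.
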